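(* Let $M=(W,D,\{P_i\}_{i\in\mathcal{A}},V,\mathsf{val})$ be a model, $w\in W$, $i\in\mathcal{A}$ an agent, $t$ an atomic term, and $\eta\in\Theta_V^{+}=(\tfrac12,1]\cap\mathbb{Q}$. Then \[ M,w\models Kv_i^\eta(t)\iff \exists\, d\in D \text{ such that } P_i(w)\bigl(\llbracket t=d\rrbracket^M\bigr)\ge \eta . \] That is, the unique-existence condition in the semantics of $Kv_i^\eta(t)$ may be replaced by plain existence.
   Context: Fix a countable set $\mathsf{Prop}$ of propositional variables, a countable set $\mathsf{Term}$ of atomic terms, and a finite set of agents $\mathcal{A}=\{1,\dots,n\}$. Let $\Theta_K=[0,1]\cap\mathbb{Q}$ and $\Theta_V^+=(\frac12,1]\cap\mathbb{Q}$. Formulas are generated by $\varphi::= p\mid t=s\mid\neg\varphi\mid(\varphi\to\psi)\mid K_i^\theta\varphi\mid Kv_i^\eta(t)$ with $p\in\mathsf{Prop}$, $t,s\in\mathsf{Term}$, $i\in\mathcal{A}$, $\theta\in\Theta_K$, $\eta\in\Theta_V^+$. A model is $M=(W,D,\{P_i\}_{i\in\mathcal{A}},V,\mathsf{val})$ with $W\neq\emptyset$ a set of worlds, $D\neq\emptyset$ a domain of values, $P_i(w)$ a countably additive probability measure on the powerset of $W$ for each $i\in\mathcal{A}$, $w\in W$, $V:W\times\mathsf{Prop}\to\{0,1\}$, and $\mathsf{val}:W\times\mathsf{Term}\to D$. Write $\llbracket\varphi\rrbracket^M=\{u\in W\mid M,u\models\varphi\}$ and $\llbracket t=d\rrbracket^M=\{u\in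 W\mid \mathsf{val}(u,t)=d\}$ for $d\in D$. Satisfaction: $M,w\models p$ iff $V(w,p)=1$; $M,w\models t=s$ iff $\mathsf{val}(w,t)=\mathsf{val}(w,s)$; Boolean clauses as usual; $M,w\models K_i^\theta\varphi$ iff $P_i(w)(\llbracket\varphi\rrbracket^M)\ge\theta$; $M,w\models Kv_i^\eta(t)$ iff there exists a unique $d\in D$ with $P_i(w)(\llbracket t=d\rrbracket^M)\ge\eta$. *)

From HB Require Import structures.
From mathcomp Require Import all_boot all_order all_algebra.
From mathcomp Require Import all_classical all_reals all_analysis.
Set Implicit Arguments. Unset Strict Implicit. Unset Printing Implicit Defensive.
Import Order.TTheory GRing.Theory Num.Theory.
Import numFieldNormedType.Exports.
Local Open Scope classical_set_scope.
Local Open Scope ring_scope.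

Record prob_measure (R : realType) (W : Type) := ProbMeasure {
  pm :> set W -> R;
  pm_ge0 : forall A : set W, 0 <= pm A;
  pm_setT : pm setT = 1;
  pm_sigma : forall F : nat -> set W, trivIset setT F ->
    (fun n : nat => \sum_(k < n) pm (F k)) @ \oo --> pm (\bigcup_k F k)
}.

Definition thetaK := {q : rat | (0 <= q) && (q <= 1)}.
Definition thetaV := {q : rat | (1 / 2 < q) && (q <= 1)}.

Definition Prp := nat.
Definition Term := nat.

Inductive form (n : nat) : Type :=
| FProp : Prp -> form n
| FEq : Term -> Term -> form n
| FNeg : form n -> form n
| FImp : form n -> form n -> form n
| FK : 'I_n -> thetaK -> form n -> form n
| FKv : 'I_n -> thetaV -> Term -> form n.

Record model (R : realType) (n : nat) := Model {
  world : Type;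
  world_ne : inhabited world;
  dom : Type;
  dom_ne : inhabited dom;
  mprob : 'I_n -> world -> prob_measure R world;
  mvar : world -> Prp -> bool;
  mval : world -> Term -> dom
}.


Arguments mprob {R n} m _ _ : rename.
Arguments mvar {R n} m _ _ : rename.
Arguments mval {R n} m _ _ : rename.

Fixpoint sat (R : realType) (n : nat) (M : model R n) (w : world M) (phi : form n)
  {struct phi} : Prop :=
  match phi with
  | FProp p => mvar M w p = true
  | FEq t s => mval M w t = mval M w s
  | FNeg psi => ~ @sat R n M w psi
  | FImp psi chi => @sat R n M w psi -> @sat R n M w chi
  | FK i th psi => ratr (proj1_sig th) <= mprob M i w [set u | @sat R n M u psi]
  | FKv i eta t =>
      exists! d : dom M, ratr (proj1_sig eta) <= mprob M i w [set u | mval M u t = d]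
  end.
Arguments sat {R n} M w phi.

From HB Require Import structures.
From mathcomp Require Import all_boot all_order all_algebra.
From mathcomp Require Import all_classical all_reals all_analysis.
Import Order.TTheory GRing.Theory Num.Theory.
Import numFieldNormedType.Exports.
Local Open Scope classical_set_scope.
Local Open Scope ring_scope.

(* Two disjoint events cannot both have probability above 1/2, so at most one
   value of t can reach a threshold eta > 1/2: existence already gives
   uniqueness. *)

Section ProbMeasure.
Variables (R : realType) (W : Type) (P : prob_measure R W).

Lemma pm_sum_le_bigcup (F : nat -> set W) (m : nat) :
  trivIset setT F -> \sum_(k < m) P (F k) <= P (\bigcup_k F k).
Proof.
move=> tF.
have cvF : (fun n => \sum_(k < n) P (F k)) @ \oo --> P (\bigcup_k F k).
  exact: pm_sigma.
have nd : nondecreasing_seq (fun n => \sum_(k < n) P (F k)).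
  by apply/nondecreasing_seqP => k; rewrite big_ord_recr lerDl pm_ge0.
rewrite -(cvg_lim _ cvF) //; apply: nondecreasing_cvgn_le => //.
by apply/cvg_ex; exists (P (\bigcup_k F k)).
Qed.

Lemma pm_disjoint_le1 (A B : set W) : A `&` B = set0 -> P A + P B <= 1.
Proof.
move=> AB0; pose F k := nth set0 [:: A; B; ~` (A `|` B)] k.
have AB x : A x -> B x -> False by move=> Ax Bx; rewrite -[False]/(set0 x) -AB0.
have tF : trivIset setT F.
  move=> i j _ _ [x [Fix Fjx]].
  case: i Fix => [|[|[|i]]] Fix; case: j Fjx => [|[|[|j]]] Fjx //=;
    rewrite /F /= ?nth_nil in Fix Fjx; exfalso;
    have := AB x; tauto.
have FT : \bigcup_k F k = setT.
  apply/seteqP; split => // x _.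
  have [Ax|nAx] := pselect (A x); first by exists 0%N.
  have [Bx|nBx] := pselect (B x); first by exists 1%N.
  by exists 2%N => //; case.
have := pm_sum_le_bigcup F 2%N tF.
by rewrite FT pm_setT !big_ord_recr big_ord0 /= add0r.
Qed.

Lemma pm_fiber_gt_half_unique (D : Type) (f : W -> D) (x : R) (d d' : D) :
  1 / 2 < x -> x <= P [set u | f u = d] -> x <= P [set u | f u = d'] -> d = d'.
Proof.
move=> x_gt Pd Pd'; apply: contrapT => dd'.
have disj : [set u | f u = d] `&` [set u | f u = d'] = set0.
  by apply/seteqP; split => // u [/= -> /dd'].
have := le_trans (lerD Pd Pd') (pm_disjoint_le1 _ _ disj).
by apply/negP; rewrite -ltNge {1}(splitr 1) ltrD.
Qed.

End ProbMeasure.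

Lemma thetaV_gt_half (R : realType) (eta : thetaV) :
  1 / 2 < ratr (proj1_sig eta) :> R.
Proof.
case: eta => q /= /andP[q_gt _].
by rewrite -(ltr_rat R) fmorph_div /= rmorph1 rmorph_nat in q_gt.
Qed.

Theorem proposition1 (R : realType) (n : nat) (M : model R n) (w : world M)
    (i : 'I_n) (t : Term) (eta : thetaV) :
  sat M w (FKv i eta t) <->
  exists d : dom M, ratr (proj1_sig eta) <= mprob M i w [set u | mval M u t = d].
Proof.
split=> [[d [Pd _]]|[d Pd]]; first by exists d.
exists d; split=> // d'.
exact: pm_fiber_gt_half_unique (thetaV_gt_half R eta) Pd.
Qed.
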